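(* Let ${\bf v}=(v^1,\dots,v^n)$ and consider a $2+1$ dimensional system in Godunov form $$(F_{0,i})_t+(F_{1,i})_x+(F_{2,i})_y=0,\qquad i=1,\dots,n,$$ where $F_0,F_1,F_2$ are functions of ${\bf v}$ and $F_{\alpha,i}=\partial F_\alpha/\partial v^i$. Let $l^1,\dots,l^n,l$ be (inhomogeneous) linear forms in ${\bf v}$ whose $(n+1)\times(n+1)$ coefficient matrix is nondegenerate, and define $$\tilde v^i=\frac{l^i({\bf v})}{l({\bf v})},\qquad \tilde F_\alpha=\frac{F_\alpha}{l({\bf v})},\quad \alpha=0,1,2,$$ with $\tilde F_\alpha$ regarded as functions of $\tilde{\bf v}$. Then the system is equivalent to the system of the same Godunov form $$(\tilde F_{0,i})_t+(\tilde F_{1,i})_x+(\tilde F_{2,i})_y=0,\qquad i=1,\dots,n,\qquad \tilde F_{\alpha,i}=\partial\tilde F_\alpha/\partial\tilde v^i,$$ i.e. the Godunov representation is form-invariant under this projective action of $GL_{n+1}$. *)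

From HB Require Import structures.
From mathcomp Require Import all_boot all_order all_algebra.
From mathcomp Require Import all_classical all_reals all_analysis.
Set Implicit Arguments. Unset Strict Implicit. Unset Printing Implicit Defensive.
Import Order.TTheory GRing.Theory Num.Theory.
Import numFieldNormedType.Exports.
Local Open Scope ring_scope.
Local Open Scope classical_set_scope.

Section Godunov.
Variable R : realType.

Definition partial (m : nat) (f : 'rV[R]_m -> R) (i : 'I_m) (x : 'rV[R]_m) : R :=
  derive f x (delta_mx 0 i).

Definition hom (n : nat) (v : 'rV[R]_n) : 'rV[R]_(n + 1) :=
  row_mx v (const_mx 1).

(* The coefficient matrix M : 'M_(n+1) encodes n+1 inhomogeneous linear forms:
   column k of M holds the coefficients of the k-th form (coefficients of
   v^1..v^n, then the constant term).  Columns 0..n-1 are l^1..l^n, and the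
   last column is l. *)
Definition lforms (n : nat) (M : 'M[R]_(n + 1)) (v : 'rV[R]_n) : 'rV[R]_n :=
  lsubmx (hom v *m M).
Definition lform (n : nat) (M : 'M[R]_(n + 1)) (v : 'rV[R]_n) : R :=
  rsubmx (hom v *m M) 0 0.

Definition projmap (n : nat) (M : 'M[R]_(n + 1)) (v : 'rV[R]_n) : 'rV[R]_n :=
  (lform M v)^-1 *: lforms M v.

(* F~_a regarded as a function of v~: v = projmap (invmx M) v~ is the inverse
   projective transformation, and F~_a(v~) = F_a(v) / l(v). *)
Definition Ftilde (n : nat) (M : 'M[R]_(n + 1)) (F : 'I_3 -> 'rV[R]_n -> R)
  (a : 'I_3) (w : 'rV[R]_n) : R :=
  F a (projmap (invmx M) w) / lform M (projmap (invmx M) w).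

Definition utilde (n : nat) (M : 'M[R]_(n + 1)) (u : 'rV[R]_3 -> 'rV[R]_n)
  (p : 'rV[R]_3) : 'rV[R]_n := projmap M (u p).

Definition godunov (n : nat) (F : 'I_3 -> 'rV[R]_n -> R)
  (u : 'rV[R]_3 -> 'rV[R]_n) (p : 'rV[R]_3) : Prop :=
  forall i : 'I_n,
    \sum_(a < 3) partial (fun q => partial (F a) i (u q)) a p = 0.

End Godunov.

From Pilot Require Import Defs.
From HB Require Import structures.
From mathcomp Require Import all_boot all_order all_algebra.
From mathcomp Require Import all_classical all_reals all_analysis.
From mathcomp Require Import ring.
Set Implicit Arguments. Unset Strict Implicit. Unset Printing Implicit Defensive.
Import Order.TTheory GRing.Theory Num.Theory.
Import numFieldNormedType.Exports.
Local Open Scope ring_scope.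
Local Open Scope classical_set_scope.

(* Write N := M^-1, so that v = projmap N v~ and F~_a(v~) = l_N(v~) F_a(projmap N v~),
   where l_N is the last form of N.  Differentiating, F~_{a,i} is a fixed linear
   combination, with coefficients from row i of N, of the F_{a,j} and of the
   Euler term F_a - sum_j v^j F_{a,j}.  Along a solution the derivative of the
   Euler term is - sum_j v^j (F_{a,j})', since the terms (v^j)' F_{a,j} cancel.
   Hence the transformed equations are the first n entries of N *m X, where
   X := (E, - sum_j v^j E_j) collects the original equations E_j; as X is
   orthogonal to (v, 1) and N is invertible, N *m X has vanishing first n
   entries only if X = 0. *)

Section MatrixCalculus.
Variable R : realType.

Lemma differentiable_mx (V : normedModType R) m n (h : V -> 'M[R]_(m, n)) x :
  (forall i j, differentiable (fun y => h y i j) x) -> differentiable h x.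
Proof.
move=> dh.
have -> : h = \sum_(i < m) \sum_(j < n) (fun y => h y i j *: delta_mx i j).
  apply/funext => y; rewrite [LHS]matrix_sum_delta !fct_sumE.
  by apply: eq_bigr => i _; rewrite fct_sumE.
by do 2![apply: differentiable_sum => ?]; exact: differentiableZl.
Qed.

Lemma differentiable_mx_coord (V : normedModType R) m n (h : V -> 'M[R]_(m, n))
    x i j :
  differentiable h x -> differentiable (fun y => h y i j) x.
Proof.
by move=> dh; exact: (differentiable_comp dh (differentiable_coord _ i j)).
Qed.

Lemma derive_mx_coord (V : normedModType R) m n (h : V -> 'M[R]_(m, n)) x v i j :
  differentiable h x -> 'D_v (fun y => h y i j) x = ('D_v h x) i j.
Proof. by move=> dh; rewrite (derive_mx (diff_derivable (v := v) dh)) mxE. Qed.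

Lemma derive_row_coord n (w v : 'rV[R]_n) j :
  'D_v (fun y : 'rV[R]_n => y 0 j) w = v 0 j.
Proof. by rewrite derive_mx_coord // derive_id. Qed.

Lemma derive_comp_partial (V : normedModType R) n (g : 'rV[R]_n -> R)
    (h : V -> 'rV[R]_n) x v :
  differentiable h x -> differentiable g (h x) ->
  'D_v (g \o h) x = \sum_(j < n) ('D_v h x) 0 j * partial g j (h x).
Proof.
move=> dh dg; rewrite deriveE; last exact: differentiable_comp.
rewrite diff_comp // /= -(deriveE (f := h) v) //.
rewrite [X in 'd g (h x) X]row_sum_delta linear_sum.
by apply: eq_bigr => j _; rewrite linearZ /= /partial !deriveE.
Qed.

Lemma sum_delta_mx_mul n (i : 'I_n) (c : 'I_n -> R) :
  \sum_(j < n) (delta_mx 0 i : 'rV[R]_n) 0 j * c j = c i.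
Proof.
rewrite (bigD1 i) //= big1 ?addr0; first by rewrite mxE !eqxx mul1r.
by move=> j ji; rewrite mxE (negPf ji) andbF mul0r.
Qed.

End MatrixCalculus.

(* The bare name [hom] would resolve to the linear-map type of [vector]. *)
Local Notation hom := Defs.hom.

Section ProjectiveMap.
Variables (R : realType) (n : nat).
Implicit Types (M N : 'M[R]_(n + 1)) (v w : 'rV[R]_n).

Lemma hom_lshift v j : hom v 0 (lshift 1 j) = v 0 j.
Proof. by rewrite /hom row_mxEl. Qed.

Lemma hom_rshift v k : hom v 0 (rshift n k) = 1.
Proof. by rewrite /hom row_mxEr mxE. Qed.

Lemma hom_mulmxE m (A : 'M[R]_(n + 1, m)) v k :
  (hom v *m A) 0 k = \sum_(j < n) v 0 j * A (lshift 1 j) k + A (rshift n 0) k.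
Proof.
rewrite mxE big_split_ord /= big_ord1 hom_rshift mul1r.
by congr (_ + _); apply: eq_bigr => j _; rewrite hom_lshift.
Qed.

Lemma lformE M v : lform M v = (hom v *m M) 0 (rshift n 0).
Proof. by rewrite /lform mxE. Qed.

Lemma projmapE M v j :
  projmap M v 0 j = (lform M v)^-1 * (hom v *m M) 0 (lshift 1 j).
Proof. by rewrite /projmap /lforms !mxE. Qed.

Lemma hom_projmap M v : lform M v != 0 ->
  hom (projmap M v) = (lform M v)^-1 *: (hom v *m M).
Proof.
move=> lM; rewrite -[hom v *m M]hsubmxK scale_row_mx {1}/hom; congr row_mx.
by apply/rowP => k; rewrite ord1 mxE [RHS]mxE -/(lform M v) mulVf.
Qed.

Lemma lform_inv_projmap M v : M \in unitmx -> lform M v != 0 ->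
  lform (invmx M) (projmap M v) = (lform M v)^-1.
Proof.
by move=> uM lM; rewrite lformE hom_projmap // -scalemxAl mulmxK // mxE hom_rshift mulr1.
Qed.

Lemma projmapK M v : M \in unitmx -> lform M v != 0 ->
  projmap (invmx M) (projmap M v) = v.
Proof.
move=> uM lM; apply/rowP => j.
rewrite projmapE lform_inv_projmap // invrK hom_projmap // -scalemxAl mulmxK //.
by rewrite mxE hom_lshift mulrA mulfV ?mul1r.
Qed.

Lemma Ftilde_invE M F a w : M \in unitmx -> lform (invmx M) w != 0 ->
  Ftilde M F a w = lform (invmx M) w * F a (projmap (invmx M) w).
Proof.
move=> uM lw; have uN : invmx M \in unitmx by rewrite unitmx_inv.
by rewrite /Ftilde -{2}[M]invmxK lform_inv_projmap // invrK mulrC.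
Qed.

Lemma hom_mulmx_sumE N k :
  (fun w => (hom w *m N) 0 k) =
  \sum_(j < n) (fun w : 'rV[R]_n => w 0 j * N (lshift 1 j) k) + cst (N (rshift n 0) k).
Proof. by apply/funext => w; rewrite /= fct_sumE hom_mulmxE. Qed.

Lemma differentiable_hom_mulmx N k w :
  differentiable (fun w => (hom w *m N) 0 k) w.
Proof.
rewrite hom_mulmx_sumE; apply: differentiableD => //.
apply: differentiable_sum => j.
by apply: differentiableM => //; exact: differentiable_coord.
Qed.

Lemma derive_hom_mulmx N k w v :
  'D_v (fun w => (hom w *m N) 0 k) w = \sum_(j < n) v 0 j * N (lshift 1 j) k.
Proof.
have dc j : differentiable (fun y : 'rV[R]_n => y 0 j * N (lshift 1 j) k) w.
  by apply: differentiableM => //; exact: differentiable_coord.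
rewrite hom_mulmx_sumE deriveD; last 2 first.
- by apply: derivable_sum => j; exact: diff_derivable.
- exact: derivable_cst.
rewrite derive_cst addr0 derive_sum => [|j]; last exact: diff_derivable.
apply: eq_bigr => j _; rewrite deriveMr; last exact/diff_derivable/differentiable_coord.
by rewrite derive_row_coord mulrC.
Qed.

Lemma lform_funE N : lform N = (fun w => (hom w *m N) 0 (rshift n 0)).
Proof. by apply/funext => w; exact: lformE. Qed.

Lemma differentiable_lform N w : differentiable (lform N) w.
Proof. by rewrite lform_funE; exact: differentiable_hom_mulmx. Qed.

Lemma derive_lform N w v :
  'D_v (lform N) w = \sum_(j < n) v 0 j * N (lshift 1 j) (rshift n 0).
Proof. by rewrite lform_funE derive_hom_mulmx. Qed.

Lemma projmap_coordE N j :
  (fun w => projmap N w 0 j) =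
  (fun w => (lform N w)^-1) * (fun w => (hom w *m N) 0 (lshift 1 j)).
Proof. by apply/funext => w; rewrite /= projmapE. Qed.

Lemma differentiable_projmap N w : lform N w != 0 -> differentiable (projmap N) w.
Proof.
move=> lw; apply: differentiable_mx => i j; rewrite ord1 projmap_coordE.
apply: differentiableM; last exact: differentiable_hom_mulmx.
by apply: differentiableV => //; exact: differentiable_lform.
Qed.

Lemma derive_projmap N w i j : lform N w != 0 ->
  ('D_'e_i (projmap N) w) 0 j =
  (lform N w)^-1 *
  (N (lshift 1 i) (lshift 1 j) - projmap N w 0 j * N (lshift 1 i) (rshift n 0)).
Proof.
move=> lw; rewrite -derive_mx_coord; last exact: differentiable_projmap.
rewrite projmap_coordE deriveM; last 2 first.
- exact/diff_derivable/differentiableV/lw/differentiable_lform.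
- exact/diff_derivable/differentiable_hom_mulmx.
rewrite deriveV //; last exact/diff_derivable/differentiable_lform.
rewrite derive_lform derive_hom_mulmx !sum_delta_mx_mul projmapE /GRing.scale /=.
by field.
Qed.

End ProjectiveMap.

Section TransformedFlux.
Variables (R : realType) (n : nat).
Implicit Types (M N : 'M[R]_(n + 1)) (f : 'rV[R]_n -> R).

Definition euler_term f (v : 'rV[R]_n) : R := f v - \sum_(j < n) v 0 j * partial f j v.

Definition projective_comb N (v : 'rV[R]_n) (E : 'I_n -> R) (i : 'I_n) : R :=
  \sum_(j < n) N (lshift 1 i) (lshift 1 j) * E j
  - N (lshift 1 i) (rshift n 0) * \sum_(j < n) v 0 j * E j.

Definition projective_partial N f (i : 'I_n) (v : 'rV[R]_n) : R :=
  \sum_(j < n) N (lshift 1 i) (lshift 1 j) * partial f j v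
  + N (lshift 1 i) (rshift n 0) * euler_term f v.

Lemma partial_Ftilde M F a i w : M \in unitmx -> lform (invmx M) w != 0 ->
  differentiable (F a) (projmap (invmx M) w) ->
  partial (Ftilde M F a) i w = projective_partial (invmx M) (F a) i (projmap (invmx M) w).
Proof.
move=> uM lw dF; set N := invmx M.
have near_lw : \forall w' \near w, lform N w' != 0.
  by apply: (cvgr_neq0 _ (differentiable_continuous (differentiable_lform N w))).
have nearE : \near w, Ftilde M F a w = (lform N * (F a \o projmap N)) w.
  by near=> w'; rewrite Ftilde_invE //; near: w'.
have dphi := differentiable_projmap lw.
rewrite /partial (near_eq_derive _ nearE) deriveM; last 2 first.
- exact/diff_derivable/differentiable_lform.
- exact/diff_derivable/differentiable_comp.
rewrite derive_lform sum_delta_mx_mul derive_comp_partial //.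
under eq_bigr do rewrite derive_projmap //.
rewrite /projective_partial /euler_term /GRing.scale /= mulrBr !mulr_sumr.
rewrite addrA addrAC -sumrB.
rewrite [in RHS]mulrC; congr (_ + _); apply: eq_bigr => j _.
by field.
Unshelve. all: by end_near.
Qed.

Lemma projective_comb_eq0 M v (E : 'I_n -> R) : M \in unitmx -> lform M v != 0 ->
  (forall i, projective_comb (invmx M) v E i = 0) -> forall j, E j = 0.
Proof.
move=> uM lv HE.
pose X : 'cV[R]_(n + 1) := col_mx (\col_j E j) (const_mx (- \sum_(j < n) v 0 j * E j)).
pose Y := invmx M *m X.
have XE : X = M *m Y by rewrite /Y mulKVmx.
have Yl i : Y (lshift 1 i) 0 = 0.
  rewrite -(HE i) /projective_comb mxE big_split_ord /= big_ord1 col_mxEd mxE.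
  rewrite mulrN; congr (_ - _).
  by apply: eq_bigr => j _; rewrite col_mxEu mxE.
(* X is orthogonal to (v, 1), and hom v *m M = (lforms M v, lform M v). *)
have homX : (hom v *m X) 0 0 = 0.
  rewrite hom_mulmxE col_mxEd mxE.
  by rewrite (eq_bigr (fun j => v 0 j * E j)) ?subrr // => j _; rewrite col_mxEu mxE.
have Yr : Y (rshift n 0) 0 = 0.
  move: homX; rewrite XE mulmxA mxE big_split_ord /= big_ord1.
  rewrite big1 ?add0r => [|j _]; last by rewrite Yl mulr0.
  by rewrite -lformE => /eqP; rewrite mulf_eq0 (negPf lv) => /eqP.
have Y0 : Y = 0.
  apply/matrixP => k l; rewrite ord1 [RHS]mxE.
  by case: (split_ordP k) => j ->; [exact: Yl | rewrite ord1; exact: Yr].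
move=> j; transitivity (X (lshift 1 j) 0); first by rewrite col_mxEu mxE.
by rewrite XE Y0 mulmx0 mxE.
Qed.

Section AlongSolution.
Variables (V : normedModType R) (f : 'rV[R]_n -> R) (u : V -> 'rV[R]_n) (p : V).
Hypotheses (du : differentiable u p) (df : differentiable f (u p))
  (dpf : forall j, differentiable (partial f j) (u p)).

Let dpfu j : differentiable (partial f j \o u) p.
Proof. exact: differentiable_comp. Qed.

Let euler_term_compE : (fun q => euler_term f (u q)) =
  f \o u - \sum_(j < n) ((fun q => u q 0 j) * (partial f j \o u)).
Proof. by apply/funext => q; rewrite /euler_term /= fct_sumE. Qed.

Let differentiable_euler_term_comp : differentiable (fun q => euler_term f (u q)) p.
Proof.
rewrite euler_term_compE; apply: differentiableB; first exact: differentiable_comp.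
apply: differentiable_sum => j.
by apply: differentiableM => //; exact: differentiable_mx_coord.
Qed.

Lemma derive_euler_term_comp v :
  'D_v (fun q => euler_term f (u q)) p =
  - \sum_(j < n) u p 0 j * 'D_v (fun q => partial f j (u q)) p.
Proof.
have du_j j : differentiable (fun q => u q 0 j) p by exact: differentiable_mx_coord.
rewrite euler_term_compE deriveB; last 2 first.
- exact/diff_derivable/differentiable_comp.
- by apply/diff_derivable/differentiable_sum => j; exact: differentiableM.
rewrite derive_sum; last by move=> j; exact/diff_derivable/differentiableM.
under eq_bigr => j _.
  rewrite deriveM; [|exact: diff_derivable|exact: diff_derivable].
  rewrite derive_mx_coord //.
  over.
rewrite derive_comp_partial // big_split /= opprD addrCA -sumrB.
by rewrite [X in _ + X]big1 ?addr0 // => j _; rewrite /GRing.scale /= mulrC subrr.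
Qed.

Lemma derive_projective_partial_comp N i v :
  'D_v (fun q => projective_partial N f i (u q)) p =
  projective_comb N (u p) (fun j => 'D_v (fun q => partial f j (u q)) p) i.
Proof.
rewrite (_ : (fun q => _) =
    \sum_(j < n) (N (lshift 1 i) (lshift 1 j) \*: (partial f j \o u))
    + N (lshift 1 i) (rshift n 0) \*: (fun q => euler_term f (u q))); last first.
  by apply/funext => q; rewrite /projective_partial /= fct_sumE.
rewrite deriveD; last 2 first.
- by apply/diff_derivable/differentiable_sum => j; exact: differentiableZ.
- exact/diff_derivable/differentiableZ.
rewrite derive_sum; last by move=> j; exact/diff_derivable/differentiableZ.
rewrite deriveZ; last exact: diff_derivable.
rewrite derive_euler_term_comp /projective_comb /GRing.scale /= mulrN; congr (_ - _).
by apply: eq_bigr => j _; rewrite deriveZ //; exact: diff_derivable.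
Qed.

End AlongSolution.

End TransformedFlux.

Section GodunovResidual.
Variables (R : realType) (n : nat).
Implicit Types (M : 'M[R]_(n + 1)) (F : 'I_3 -> 'rV[R]_n -> R)
  (u : 'rV[R]_3 -> 'rV[R]_n) (p q : 'rV[R]_3).

Definition godunov_residual F u p (i : 'I_n) : R :=
  \sum_(a < 3) partial (fun q => partial (F a) i (u q)) a p.

Lemma partial_Ftilde_utilde M F a i u q :
  M \in unitmx -> lform M (u q) != 0 -> differentiable (F a) (u q) ->
  partial (Ftilde M F a) i (utilde M u q) = projective_partial (invmx M) (F a) i (u q).
Proof.
move=> uM lu dF.
by rewrite /utilde partial_Ftilde ?projmapK // lform_inv_projmap // invr_eq0.
Qed.

Lemma godunov_residual_utilde M F u p i : M \in unitmx ->
  (\forall q \near p, lform M (u q) != 0 /\ forall a, differentiable (F a) (u q)) ->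
  differentiable u p -> (forall a j, differentiable (partial (F a) j) (u p)) ->
  godunov_residual (Ftilde M F) (utilde M u) p i =
  projective_comb (invmx M) (u p) (godunov_residual F u p) i.
Proof.
move=> uM near_u du dpF; have [_ dFp] := nbhs_singleton near_u.
rewrite /godunov_residual.
under eq_bigr => a _.
  have nearE : \forall q \near p, partial (Ftilde M F a) i (utilde M u q) =
      projective_partial (invmx M) (F a) i (u q).
    by apply: filterS near_u => q [lu dF]; exact: partial_Ftilde_utilde.
  rewrite /partial (near_eq_derive _ nearE) derive_projective_partial_comp //.
  over.
rewrite /projective_comb sumrB -mulr_sumr; congr (_ - _ * _); rewrite exchange_big /=;
  by apply: eq_bigr => j _; rewrite mulr_sumr.
Qed.

End GodunovResidual.

Theorem proposition1 (R : realType) (n : nat) (M : 'M[R]_(n + 1))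
  (F : 'I_3 -> 'rV[R]_n -> R) (U : set 'rV[R]_n)
  (D : set 'rV[R]_3) (u : 'rV[R]_3 -> 'rV[R]_n) :
  M \in unitmx ->
  open U ->
  (forall v, U v -> lform M v != 0) ->
  (forall a v, U v -> differentiable (F a) v) ->
  (forall a i v, U v -> differentiable (partial (F a) i) v) ->
  open D ->
  (forall p, D p -> differentiable u p) ->
  (forall p, D p -> U (u p)) ->
  ((forall p, D p -> godunov F u p) <->
   (forall p, D p -> godunov (Ftilde M F) (utilde M u) p)).
Proof.
move=> uM _ lU dF dpF oD du uU.
have residualE p i : D p -> godunov_residual (Ftilde M F) (utilde M u) p i =
    projective_comb (invmx M) (u p) (godunov_residual F u p) i.
  move=> Dp; apply: godunov_residual_utilde => //; last 2 first.
  - exact: du.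
  - by move=> a j; exact/dpF/uU.
  by apply: filterS (open_nbhs_nbhs (conj oD Dp)) => q Dq; split => [|a];
    [exact/lU/uU | exact/dF/uU].
split=> G p Dp.
- have G0 j : godunov_residual F u p j = 0 := G p Dp j.
  move=> i; rewrite -/(godunov_residual _ _ _ _) residualE // /projective_comb.
  by rewrite !big1 ?mulr0 ?subrr // => j _; rewrite G0 mulr0.
- apply: (projective_comb_eq0 uM (lU _ (uU _ Dp))) => i.
  by rewrite -residualE //; exact: G.
Qed.
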